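(* Suppose $N$ acts locally freely on $\mu^{-1}(0)$. Then condition (S) holds (i.e. at no point $p\in\mu^{-1}(0)$ is there a nonzero $(X_1,X_2,X_3)\in\mathfrak n^3$ with $(IX_1+SX_2+TX_3)_p=0$) if and only if, for every $(a,b)\in K$, the real-linear map $\Lambda_{(a,b)}\colon \mathfrak n_{L,J}\otimes(\mathbb R\times\mathbb C)\to\mathbb C^{L\setminus J}$, $(\theta^{(1)},\theta^{(c)})\mapsto (b_k\theta^{(1)}_k+a_k\theta^{(c)}_k)_{k\in L\setminus J}$, is injective, where $J=J(a,b)$, $L=L(a,b)$.
   Context: Setting: $\mathbb C^{d,d}=\mathbb C^d\times\mathbb C^d$ with coordinates $(z,w)$, $g=\mathrm{Re}\sum_k(dz_k\,d\bar z_k-dw_k\,d\bar w_k)$, $I(z,w)=(iz,-iw)$, $S(z,w)=(w,z)$, $T=IS$; $\mathbb T^d$ acts by $(z_k,w_k)\mapsto(e^{i\theta_k}z_k,e^{i\theta_k}w_k)$, and elements of $\mathfrak n\subset\mathbb R^d$ are identified with induced vector fields. Fix $u_1,\dots,u_d\in\mathbb Z^n$ spanning $\mathbb R^n$; $\beta\colon\mathbb R^d\to\mathbb R^n$, $e_k\mapsto u_k$; $\mathfrak n=\ker\beta$ with inclusion $\iota$; $N\subset\mathbb T^d$ the kernel of the induced map $\mathbb T^d\to\mathbb T^n$. Identify $\mathbb R^d$ with its dual via the standard inner product. Fix real $\lambda^{(j)}_k$, $\lambda^{(c)}_k=\lambda^{(2)}_k+i\lambda^{(3)}_k$; $\mu_I(z,w)=\sum_k(\tfrac12(|z_k|^2+|w_k|^2)+\lambda^{(1)}_k)\iota^*e_k$,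 $(\mu_S+i\mu_T)(z,w)=\sum_k(iz_k\bar w_k+\lambda^{(c)}_k)\iota^*e_k$. For $(a,b)\in\mathbb R^n\times\mathbb C^n$: $a_k=\langle a,u_k\rangle-\lambda^{(1)}_k$, $b_k=\langle b,u_k\rangle-\lambda^{(c)}_k$; $K=\{(a,b):a_k\geqslant|b_k|\ \forall k\}$; $V_k=\{a_k=0=b_k\}$, $W_k=\{a_k=|b_k|\}$; $J(a,b)=\{k:(a,b)\in V_k\}$, $L(a,b)=\{k:(a,b)\in W_k\}$ (so $J\subset L$). For $A\subset\{1,\dots,d\}$ let $\mathbb R_A=\mathrm{span}\{e_k:k\in A\}$ and $A'$ its complement. Let $\mathfrak n_L=\mathfrak n\cap\mathbb R_L$ and $\mathfrak n_{L,J}\subset\mathbb R_{L\setminus J}$ the image of $\mathfrak n_L$ under orthogonal projection to $\mathbb R_{J'}$. An element of $\mathfrak n_{L,J}\otimes(\mathbb R\times\mathbb C)$ is written $(\theta^{(1)},\theta^{(c)})$ with $\theta^{(1)}\in\mathfrak n_{L,J}$, $\theta^{(c)}=\theta^{(2)}+i\theta^{(3)}$, $\theta^{(2)},\theta^{(3)}\in\mathfrak n_{L,J}$, with components $\theta^{(\cdot)}_k$. *)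

From HB Require Import structures.
From mathcomp Require Import all_boot all_order all_algebra.
From mathcomp Require Import reals.
From mathcomp Require Export complex.
Set Implicit Arguments. Unset Strict Implicit. Unset Printing Implicit Defensive.
Import Order.TTheory GRing.Theory Num.Theory.
Local Open Scope ring_scope.
Local Open Scope complex_scope.

Section Toric.
Variables (R : realType) (d n : nat).
Local Notation C := R[i].

(* The integer vectors u_1..u_d in Z^n; u k j is the j-th coordinate of u_k. *)
Definition umat (u : 'I_d -> 'I_n -> int) : 'M[R]_(d, n) :=
  \matrix_(k, j) (u k j)%:~R.

(* X in n = ker beta, beta(e_k) = u_k, X : R^d *)
Definition in_nfrak (u : 'I_d -> 'I_n -> int) (X : 'I_d -> R) : Prop :=
  forall j : 'I_n, \sum_(k < d) X k * (u k j)%:~R = 0.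

(* points and tangent vectors of C^{d,d} = C^d x C^d, as pairs (z, w) *)
Definition pt := (('I_d -> C) * ('I_d -> C))%type.

Definition tadd (v w : pt) : pt :=
  (fun k => v.1 k + w.1 k, fun k => v.2 k + w.2 k).
Definition tzero : pt := (fun _ => 0, fun _ => 0).

Definition Iop (v : pt) : pt := (fun k => 'i * v.1 k, fun k => - ('i * v.2 k)).
Definition Sop (v : pt) : pt := (v.2, v.1).
Definition Top (v : pt) : pt := Iop (Sop v).

(* vector field on C^{d,d} induced by X in R^d = Lie(T^d), for the action
   (z_k, w_k) |-> (e^{i theta_k} z_k, e^{i theta_k} w_k) *)
Definition vf (X : 'I_d -> R) (p : pt) : pt :=
  (fun k => 'i * (X k)%:C * p.1 k, fun k => 'i * (X k)%:C * p.2 k).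

Definition lamc (lam2 lam3 : 'I_d -> R) (k : 'I_d) : C := (lam2 k +i* lam3 k).

(* p in mu^{-1}(0): mu_I(p) = 0 and (mu_S + i mu_T)(p) = 0 in n^*;
   iota^* e_k evaluated at X in n is X_k. *)
Definition in_mu0 (u : 'I_d -> 'I_n -> int) (lam1 lam2 lam3 : 'I_d -> R)
    (p : pt) : Prop :=
  (forall X, in_nfrak u X ->
     \sum_(k < d) ((2%:R)^-1 * (`|p.1 k| ^+ 2 + `|p.2 k| ^+ 2) + (lam1 k)%:C)
                  * (X k)%:C = 0) /\
  (forall X, in_nfrak u X ->
     \sum_(k < d) ('i * p.1 k * (p.2 k)^* + lamc lam2 lam3 k) * (X k)%:C = 0).

(* N acts locally freely on mu^{-1}(0): the infinitesimal action of n is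
   injective at every point of mu^{-1}(0) (all stabilisers are discrete). *)
Definition locally_free u lam1 lam2 lam3 : Prop :=
  forall p, in_mu0 u lam1 lam2 lam3 p ->
  forall X, in_nfrak u X -> vf X p = tzero -> X = (fun _ => 0).

Definition condS u lam1 lam2 lam3 : Prop :=
  forall p, in_mu0 u lam1 lam2 lam3 p ->
  forall X1 X2 X3, in_nfrak u X1 -> in_nfrak u X2 -> in_nfrak u X3 ->
  tadd (tadd (Iop (vf X1 p)) (Sop (vf X2 p))) (Top (vf X3 p)) = tzero ->
  [/\ X1 = (fun _ => 0), X2 = (fun _ => 0) & X3 = (fun _ => 0)].

Definition ak u (lam1 : 'I_d -> R) (a : 'I_n -> R) (k : 'I_d) : R :=
  \sum_(j < n) a j * (u k j)%:~R - lam1 k.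
Definition bk u (lam2 lam3 : 'I_d -> R) (b : 'I_n -> C) (k : 'I_d) : C :=
  \sum_(j < n) b j * ((u k j)%:~R)%:C - lamc lam2 lam3 k.

Definition inK u lam1 lam2 lam3 a b : Prop :=
  forall k, `|bk u lam2 lam3 b k| <= (ak u lam1 a k)%:C.

Definition Jset u lam1 lam2 lam3 a b (k : 'I_d) : bool :=
  (ak u lam1 a k == 0) && (bk u lam2 lam3 b k == 0).
Definition Lset u lam1 lam2 lam3 a b (k : 'I_d) : bool :=
  (ak u lam1 a k)%:C == `|bk u lam2 lam3 b k|.

(* n_{L,J}: image of n_L = n \cap R_L under orthogonal projection to R_{J'} *)
Definition in_nLJ u (Lp Jp : 'I_d -> bool) (th : 'I_d -> R) : Prop :=
  exists X, [/\ in_nfrak u X, (forall k, ~~ Lp k -> X k = 0) &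
            th = (fun k => if Jp k then 0 else X k)].

(* Lambda_{(a,b)} : n_{L,J} (x) (R x C) -> C^{L \ J}; elements of C^{L\J}
   are represented as functions 'I_d -> C vanishing outside L \ J. *)
Definition Lambda u lam1 lam2 lam3 a b
    (th : ('I_d -> R) * ('I_d -> R) * ('I_d -> R)) : 'I_d -> C :=
  fun k => if Lset u lam1 lam2 lam3 a b k && ~~ Jset u lam1 lam2 lam3 a b k
    then bk u lam2 lam3 b k * (th.1.1 k)%:C
         + (ak u lam1 a k)%:C * (th.1.2 k +i* th.2 k)
    else 0.

Definition Lambda_injective u lam1 lam2 lam3 a b : Prop :=
  let Lp := Lset u lam1 lam2 lam3 a b in
  let Jp := Jset u lam1 lam2 lam3 a b in
  forall x y : ('I_d -> R) * ('I_d -> R) * ('I_d -> R),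
    in_nLJ u Lp Jp x.1.1 -> in_nLJ u Lp Jp x.1.2 -> in_nLJ u Lp Jp x.2 ->
    in_nLJ u Lp Jp y.1.1 -> in_nLJ u Lp Jp y.1.2 -> in_nLJ u Lp Jp y.2 ->
    Lambda u lam1 lam2 lam3 a b x = Lambda u lam1 lam2 lam3 a b y -> x = y.

End Toric.

From Pilot Require Import Defs.
From HB Require Import structures.
From mathcomp Require Import all_boot all_order all_algebra.
From mathcomp Require Import reals complex.
From mathcomp Require Import ring.
From Stdlib Require Import FunctionalExtensionality.
Import Order.TTheory GRing.Theory Num.Theory.
Local Open Scope complex_scope.
Local Open Scope ring_scope.

(* Over a point p = (z, w) of mu^{-1}(0) the moment conditions say exactly that
   a_k = (|z_k|^2 + |w_k|^2) / 2 and b_k = i z_k conj(w_k) for some (a, b),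
   necessarily in K, and every (a, b) in K arises this way (the annihilator of
   n is spanned by the u_k).  In the k-th coordinate, I X1 + S X2 + T X3
   vanishes iff c = X1_k, th = X2_k + i X3_k satisfy [ist_null]; this forces
   c = th = 0 when |z_k| <> |w_k| (k outside L), is void when z_k = w_k = 0
   (k in J), and reads b_k c + a_k th = 0 on L \ J.  So the vanishing
   combinations, with their J-coordinates dropped, form the kernel of
   Lambda_(a,b); what is left is supported on J, where local freeness
   applies. *)

Section PointwiseAlgebra.
Context {C : numClosedFieldType}.
Implicit Types (c th z w A be : C).

Definition momentA z w : C := 2^-1 * (`|z| ^+ 2 + `|w| ^+ 2).
Definition momentB z w : C := 'i * z * w^*.

(* The z- and w-coordinates of I X1 + S X2 + T X3 at (z, w), where
   c = X1_k and th = X2_k + i X3_k. *)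
Definition ist_null c th z w : Prop :=
  'i * th * w - c * z = 0 /\ c * w + 'i * th^* * z = 0.

Lemma ist_nullE {c1 c2 c3 z w} : c2^* = c2 -> c3^* = c3 ->
  ist_null c1 (c2 + 'i * c3) z w <->
  'i * ('i * c1 * z) + 'i * c2 * w + 'i * ('i * c3 * w) = 0 /\
  - ('i * ('i * c1 * w)) + 'i * c2 * z + - ('i * ('i * c3 * z)) = 0.
Proof.
move=> c2_real c3_real.
have e1 : 'i * ('i * c1 * z) + 'i * c2 * w + 'i * ('i * c3 * w)
          = 'i * (c2 + 'i * c3) * w - c1 * z.
  apply/eqP; rewrite -subr_eq0; apply/eqP.
  transitivity (('i ^+ 2 + 1) * (c1 * z)); first by ring.
  by rewrite sqrCi addNr mul0r.
have e2 : - ('i * ('i * c1 * w)) + 'i * c2 * z + - ('i * ('i * c3 * z))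
          = c1 * w + 'i * (c2 + 'i * c3)^* * z.
  rewrite rmorphD rmorphM /= conjCi c2_real c3_real.
  apply/eqP; rewrite -subr_eq0; apply/eqP.
  transitivity (- ('i ^+ 2 + 1) * (c1 * w)); first by ring.
  by rewrite sqrCi addNr oppr0 mul0r.
by rewrite e1 e2.
Qed.

Lemma momentA_subr_normB z w :
  momentA z w - `|momentB z w| = 2^-1 * (`|z| - `|w|) ^+ 2.
Proof.
by rewrite /momentB !normrM normCi mul1r norm_conjC /momentA; field.
Qed.

Lemma normB_le_momentA z w : `|momentB z w| <= momentA z w.
Proof.
rewrite -subr_ge0 momentA_subr_normB.
by rewrite mulr_ge0 ?invr_ge0 ?ler0n ?real_exprn_even_ge0 // realB // normr_real.
Qed.

Lemma momentA_eq_normB z w : (momentA z w == `|momentB z w|) = (`|z| == `|w|).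
Proof.
rewrite -subr_eq0 momentA_subr_normB mulf_eq0 invr_eq0 pnatr_eq0 /=.
by rewrite expf_eq0 /= subr_eq0.
Qed.

Lemma momentA_eq0 z w : (momentA z w == 0) = (z == 0) && (w == 0).
Proof.
rewrite mulf_eq0 invr_eq0 pnatr_eq0 /= paddr_eq0 ?exprn_ge0 ?normr_ge0 //.
by rewrite !expf_eq0 /= !normr_eq0.
Qed.

Lemma momentA_of_eq_norm z w : `|z| = `|w| -> momentA z w = `|z| ^+ 2.
Proof. by move=> zw; rewrite /momentA -zw; field. Qed.

(* Take w = sqrt (A + sqrt (A^2 - |be|^2)) >= 0 and z = - i be / w. *)
Lemma moment_onto A be : `|be| <= A ->
  exists z w, A = momentA z w /\ be = momentB z w.
Proof.
move=> le_be_A.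
have A_ge0 : 0 <= A := le_trans (normr_ge0 _) le_be_A.
set D := sqrtC (A ^+ 2 - `|be| ^+ 2).
have D_ge0 : 0 <= D by rewrite sqrtC_ge0 subr_ge0 ler_pXn2r // nnegrE.
have normbe2 : `|be| ^+ 2 = A ^+ 2 - D ^+ 2 by rewrite sqrtCK opprB addrC subrK.
set w := sqrtC (A + D).
have w_ge0 : 0 <= w by rewrite sqrtC_ge0 addr_ge0.
have w2 : w ^+ 2 = A + D by rewrite sqrtCK.
have [w0|wN0] := eqVneq w 0.
  have /eqP : A + D = 0 by rewrite -w2 w0 expr0n.
  rewrite paddr_eq0 // => /andP[/eqP A0 /eqP D0].
  have be0 : be = 0.
    by apply/eqP; rewrite -normr_eq0 -sqrf_eq0 normbe2 A0 D0 expr0n subr0.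
  exists 0, 0; rewrite /momentA /momentB be0 A0 normr0 expr0n.
  by split; rewrite !(mulr0, mul0r, addr0).
have AD_neq0 : A + D != 0 by rewrite -w2 expf_eq0 wN0.
exists (- 'i * be / w), w; split.
  rewrite /momentA !normrM normrN normCi mul1r normfV (ger0_norm w_ge0).
  by rewrite expr_div_n w2 normbe2; field.
rewrite /momentB (conj_Creal (ger0_real w_ge0)).
transitivity (- ('i ^+ 2) * be); first by rewrite sqrCi opprK mul1r.
by field.
Qed.

Lemma ist_null_off {c th z w} : c^* = c -> `|z| != `|w| ->
  ist_null c th z w -> c = 0 /\ th = 0.
Proof.
move=> c_real zw [/eqP e1 /eqP e2]; move: e1 e2.
rewrite subr_eq0 addr_eq0 => /eqP e1 /eqP e2.
have e3 : c * w^* = 'i * th * z^*.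
  by rewrite -c_real -rmorphM e2 rmorphN !rmorphM /= conjCi conjCK; ring.
have e4 : 'i * th * (w * w^* - z * z^*) = 0.
  transitivity ((c * z) * w^* - z * ('i * th * z^*)); first by rewrite -e1; ring.
  by rewrite -e3; ring.
have ww_zz : w * w^* - z * z^* != 0.
  by rewrite -!normCK subr_eq0 eqrXn2 // eq_sym.
have th0 : th = 0.
  by move/eqP: e4; rewrite !mulf_eq0 (negbTE ww_zz) (negbTE (neq0Ci _)) orbF => /eqP.
split=> //; move: e1 e2; rewrite th0 rmorph0 !(mulr0, mul0r, oppr0).
move=> /esym/eqP; rewrite mulf_eq0 => /orP[/eqP // | /eqP z0].
move=> /eqP; rewrite mulf_eq0 => /orP[/eqP // | /eqP w0].
by move: zw; rewrite z0 w0 eqxx.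
Qed.

Lemma ist_nullE_on {c th z w} : c^* = c -> `|z| = `|w| -> z != 0 ->
  ist_null c th z w <-> momentB z w * c + momentA z w * th = 0.
Proof.
move=> c_real zw z0; rewrite momentA_of_eq_norm // /momentB.
have ww : `|z| ^+ 2 = w * w^* by rewrite zw normCK.
have zz : `|z| ^+ 2 = z * z^* by rewrite normCK.
have z2_neq0 : `|z| ^+ 2 != 0 by rewrite expf_eq0 normr_eq0 (negbTE z0) andbF.
split=> [[e1 _] | e].
  rewrite ww; transitivity
    (- ('i * w^* * ('i * th * w - c * z)) + ('i ^+ 2 + 1) * (th * w * w^*)).
    by ring.
  by rewrite e1 sqrCi addNr !(mul0r, mulr0, oppr0, add0r).
have e' : `|z| ^+ 2 * th^* - 'i * z^* * w * c = 0.
  have := congr1 Num.conj e; rewrite rmorph0 rmorphD !rmorphM /= conjCK conjCi.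
  by rewrite c_real (conj_Creal (normr_real z)) => <-; ring.
split; apply: (mulfI z2_neq0); rewrite mulr0.
  transitivity ('i * w * ('i * z * w^* * c + `|z| ^+ 2 * th)
               - ('i ^+ 2 + 1) * (c * z * (w * w^*))).
    by rewrite ww; ring.
  by rewrite e sqrCi addNr !mulr0 mul0r subr0.
transitivity ('i * z * (`|z| ^+ 2 * th^* - 'i * z^* * w * c)
             + ('i ^+ 2 + 1) * (c * w * (z * z^*))).
  by rewrite zz; ring.
by rewrite e' sqrCi addNr !mulr0 mul0r addr0.
Qed.

End PointwiseAlgebra.

Section Toric.
Variables (R : realType) (d n : nat) (u : 'I_d -> 'I_n -> int).
Local Notation C := R[i].

Lemma complex_of_pair (x y : R) : (x +i* y) = x%:C + 'i * y%:C :> C.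
Proof. by rewrite [RHS]complexE /=; simpc. Qed.

Lemma real_complex_real (x : R) : (x%:C : C) \is Num.real.
Proof. by apply/complex_realP; exists x. Qed.

(* [n] is the kernel of [umat u]^T, so its annihilator is the row space of [umat u]^T. *)
Lemma orthogonal_nfrak_span (v : 'I_d -> R) :
  (forall X, in_nfrak u X -> \sum_(k < d) v k * X k = 0) ->
  exists a : 'I_n -> R, forall k, v k = \sum_(j < n) a j * (u k j)%:~R.
Proof.
move=> v_orth; pose U := umat R u.
have : (\row_k v k <= U^T)%MS.
  rewrite submxE; apply/eqP/matrixP => i j; rewrite !mxE.
  have coker_n : in_nfrak u (fun k => cokermx U^T k j).
    move=> j'; transitivity ((U^T *m cokermx U^T) j' j); last first.
      by rewrite mulmx_coker mxE.
    by rewrite mxE; apply: eq_bigr => k _; rewrite !mxE mulrC.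
  rewrite -[RHS](v_orth _ coker_n).
  by apply: eq_bigr => k _; rewrite mxE.
case/submxP => D vD; exists (fun j => D 0 j) => k.
have := congr1 (fun M : 'rV[R]_d => M 0 k) vD; rewrite !mxE => ->.
by apply: eq_bigr => j _; rewrite !mxE.
Qed.

Lemma sum_complex (I : finType) (x y : I -> R) :
  \sum_k (x k +i* y k) = (\sum_k x k) +i* (\sum_k y k) :> C.
Proof.
rewrite complex_of_pair !rmorph_sum mulr_sumr -big_split /=.
by apply: eq_bigr => k _; rewrite complex_of_pair.
Qed.

Lemma orthogonal_nfrak_ReIm (y : 'I_d -> C) (X : 'I_d -> R) :
  (forall Y, in_nfrak u Y -> \sum_(k < d) y k * (Y k)%:C = 0) -> in_nfrak u X ->
  \sum_(k < d) complex.Re (y k) * X k = 0 /\ \sum_(k < d) complex.Im (y k) * X k = 0.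
Proof.
move=> y_orth nX; have := y_orth X nX.
have -> : \sum_(k < d) y k * (X k)%:C =
          (\sum_(k < d) complex.Re (y k) * X k) +i* (\sum_(k < d) complex.Im (y k) * X k).
  rewrite -sum_complex; apply: eq_bigr => k _.
  by case: (y k) => yr yi; simpc.
by case.
Qed.

Lemma orthogonal_nfrak_spanC (y : 'I_d -> C) :
  (forall X, in_nfrak u X -> \sum_(k < d) y k * (X k)%:C = 0) ->
  exists b : 'I_n -> C, forall k, y k = \sum_(j < n) b j * ((u k j)%:~R)%:C.
Proof.
move=> y_orth.
have [br Re_y] := orthogonal_nfrak_span _
  (fun X nX => (orthogonal_nfrak_ReIm _ _ y_orth nX).1).
have [bi Im_y] := orthogonal_nfrak_span _
  (fun X nX => (orthogonal_nfrak_ReIm _ _ y_orth nX).2).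
exists (fun j => br j +i* bi j) => k.
rewrite [LHS]complexE Re_y Im_y -complex_of_pair -sum_complex.
by apply: eq_bigr => j _; simpc.
Qed.

Lemma span_orthogonal_nfrak (b : 'I_n -> C) (X : 'I_d -> R) : in_nfrak u X ->
  \sum_(k < d) (\sum_(j < n) b j * ((u k j)%:~R)%:C) * (X k)%:C = 0.
Proof.
move=> nX; under eq_bigr do rewrite mulr_suml.
rewrite exchange_big /=; apply: big1 => j _.
transitivity (b j * (\sum_(k < d) X k * (u k j)%:~R)%:C); last first.
  by rewrite nX mulr0.
rewrite rmorph_sum mulr_sumr; apply: eq_bigr => k _.
by rewrite rmorphM /=; ring.
Qed.

Variables lam1 lam2 lam3 : 'I_d -> R.
Local Notation Lset := (Lset u lam1 lam2 lam3).
Local Notation Jset := (Jset u lam1 lam2 lam3).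
Local Notation zero := (fun _ : 'I_d => 0 : R).

Definition toric_coords (a : 'I_n -> R) (b : 'I_n -> C) (p : pt R d) : Prop :=
  forall k, (ak u lam1 a k)%:C = momentA (p.1 k) (p.2 k) /\
            bk u lam2 lam3 b k = momentB (p.1 k) (p.2 k).

Lemma in_mu0P p :
  in_mu0 u lam1 lam2 lam3 p <-> exists a b, toric_coords a b p.
Proof.
split=> [[mu_I mu_c] | [a [b tc]]].
  pose y k := momentA (p.1 k) (p.2 k) + (lam1 k)%:C.
  have y_real k : (complex.Re (y k))%:C = y k.
    apply: RRe_real; rewrite rpredD ?real_complex_real // rpredM ?rpredV ?realn //.
    by rewrite rpredD // rpredX // normr_real.
  have [a Re_y] := orthogonal_nfrak_span _
    (fun X nX => (orthogonal_nfrak_ReIm _ _ mu_I nX).1).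
  have [b b_span] := orthogonal_nfrak_spanC _ mu_c.
  exists a, b => k; split.
    by rewrite /ak rmorphB /= -Re_y y_real addrK.
  by rewrite /bk -b_span addrK.
split=> X nX.
  rewrite -[RHS](span_orthogonal_nfrak (fun j => (a j)%:C) X nX).
  apply: eq_bigr => k _; congr (_ * _).
  rewrite -/(momentA (p.1 k) (p.2 k)) -(tc k).1 /ak rmorphB /= subrK rmorph_sum.
  by apply: eq_bigr => j _; rewrite rmorphM.
rewrite -[RHS](span_orthogonal_nfrak b X nX).
by apply: eq_bigr => k _; rewrite -/(momentB (p.1 k) (p.2 k)) -(tc k).2 /bk subrK.
Qed.

Lemma inK_of_toric_coords {a b p} : toric_coords a b p -> inK u lam1 lam2 lam3 a b.
Proof. by move=> tc k; rewrite (tc k).1 (tc k).2 normB_le_momentA. Qed.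

Lemma toric_coords_of_inK a b :
  inK u lam1 lam2 lam3 a b -> exists p, toric_coords a b p.
Proof.
move=> abK.
have /fin_all_exists [z zP] := fun k => moment_onto _ _ (abK k).
have /fin_all_exists [w wP] := zP.
by exists (z, w) => k; have [-> ->] := wP k.
Qed.

Lemma JsetE {a b p} k : toric_coords a b p ->
  Jset a b k = (p.1 k == 0) && (p.2 k == 0).
Proof.
move=> tc; have [ak_p bk_p] := tc k.
rewrite /Defs.Jset -(inj_eq (@complexI R)) rmorph0 ak_p momentA_eq0 bk_p /momentB.
by case: eqP => [->|] //=; rewrite mulr0 mul0r eqxx andbT.
Qed.

Lemma LsetE {a b p} k : toric_coords a b p ->
  Lset a b k = (`|p.1 k| == `|p.2 k|).
Proof. by move=> tc; rewrite /Defs.Lset (tc k).1 (tc k).2 momentA_eq_normB. Qed.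

Lemma ist_null_cases {a b p} k {x1 x2 x3 : R} : toric_coords a b p ->
  ist_null x1%:C (x2 +i* x3) (p.1 k) (p.2 k) <->
  (~~ Lset a b k -> [/\ x1 = 0, x2 = 0 & x3 = 0]) /\
  (Lset a b k && ~~ Jset a b k ->
     bk u lam2 lam3 b k * x1%:C + (ak u lam1 a k)%:C * (x2 +i* x3) = 0).
Proof.
move=> tc; have [ak_p bk_p] := tc k.
have x1_real : (x1%:C)^* = x1%:C := conj_Creal (real_complex_real x1).
have [J|NJ] := boolP (Jset a b k).
  move: (J); rewrite (JsetE k tc) => /andP[/eqP z0 /eqP w0].
  have L : Lset a b k by rewrite (LsetE k tc) z0 w0.
  rewrite z0 w0 L; split=> _; first by split.
  by split; rewrite !mulr0 ?subr0 ?addr0.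
have [L|NL] := boolP (Lset a b k); rewrite /=.
  have zw : `|p.1 k| = `|p.2 k| by apply/eqP; rewrite -(LsetE k tc).
  have z0 : p.1 k != 0.
    apply: contraNneq NJ => z0; rewrite (JsetE k tc) z0 eqxx /=.
    by rewrite -normr_eq0 -zw z0 normr0.
  rewrite (ist_nullE_on x1_real zw z0) -ak_p -bk_p.
  by split=> [e | [_ e]]; [split | exact: e].
split=> [/(ist_null_off x1_real) | [/(_ isT) [-> -> ->] _]].
  rewrite -(LsetE k tc) NL => /(_ isT) [x1_0 [x2_0 x3_0]].
  by split=> // _; split=> //; apply: complexI.
rewrite complex_of_pair !rmorph0 mulr0 addr0.
by split; rewrite ?rmorph0 !(mulr0, mul0r) ?subr0 ?addr0.
Qed.

Lemma combination_eq0P (X1 X2 X3 : 'I_d -> R) (p : pt R d) :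
  tadd (tadd (Iop (vf X1 p)) (Sop (vf X2 p))) (Top (vf X3 p)) = tzero R d <->
  forall k, ist_null (X1 k)%:C (X2 k +i* X3 k) (p.1 k) (p.2 k).
Proof.
have conj_real (x : R) : (x%:C : C)^* = x%:C := conj_Creal (real_complex_real x).
have ist_k k := ist_nullE (c1 := (X1 k)%:C) (z := p.1 k) (w := p.2 k)
    (conj_real (X2 k)) (conj_real (X3 k)).
split=> [comb k | ist].
  rewrite complex_of_pair; apply/ist_k; split.
    exact: (congr1 (fun q : pt R d => q.1 k) comb).
  exact: (congr1 (fun q : pt R d => q.2 k) comb).
rewrite /tadd /tzero; congr pair; apply: functional_extensionality => k;
  by have := ist k; rewrite complex_of_pair => /ist_k[].
Qed.

Lemma in_nfrakB (X Y : 'I_d -> R) :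
  in_nfrak u X -> in_nfrak u Y -> in_nfrak u (fun k => X k - Y k).
Proof.
by move=> nX nY j; under eq_bigr do rewrite mulrBl; rewrite sumrB nX nY subrr.
Qed.

Lemma eq_of_subf_eq0 (f g : 'I_d -> R) : (fun k => f k - g k) = zero -> f = g.
Proof.
move=> fg; apply: functional_extensionality => k.
by apply/eqP; rewrite -subr_eq0; have -> := congr1 (fun h => h k) fg.
Qed.

Section LambdaKernel.
Variables (a : 'I_n -> R) (b : 'I_n -> C).
Local Notation nLJ := (in_nLJ u (Lset a b) (Jset a b)).
Local Notation Lambda := (Lambda u lam1 lam2 lam3 a b).

Lemma in_nLJ0 : nLJ zero.
Proof.
exists zero; split=> //; first by move=> j; rewrite big1 // => k _; rewrite mul0r.
by apply: functional_extensionality => k; case: ifP.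
Qed.

Lemma in_nLJB (x y : 'I_d -> R) : nLJ x -> nLJ y -> nLJ (fun k => x k - y k).
Proof.
move=> [X [nX XL ->]] [Y [nY YL ->]]; exists (fun k => X k - Y k); split.
- exact: in_nfrakB.
- by move=> k NL; rewrite XL ?YL ?subrr.
- by apply: functional_extensionality => k; case: ifP; rewrite ?subrr.
Qed.

Lemma LambdaB (x y : ('I_d -> R) * ('I_d -> R) * ('I_d -> R)) :
  Lambda (fun k => x.1.1 k - y.1.1 k, fun k => x.1.2 k - y.1.2 k,
          fun k => x.2 k - y.2 k) = fun k => Lambda x k - Lambda y k.
Proof.
apply: functional_extensionality => k; rewrite /Defs.Lambda /=.
by case: ifP => _; rewrite ?subrr // !complex_of_pair !rmorphB /=; ring.
Qed.

Lemma Lambda_injectiveP :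
  Lambda_injective u lam1 lam2 lam3 a b <->
  forall x, nLJ x.1.1 -> nLJ x.1.2 -> nLJ x.2 ->
    Lambda x = (fun _ => 0) -> x = (zero, zero, zero).
Proof.
rewrite /Lambda_injective /=.
split=> [inj x nx1 nx2 nx3 Lx0 |
         ker [[x1 x2] x3] [[y1 y2] y3] nx1 nx2 nx3 ny1 ny2 ny3 Lxy].
  apply: inj => //= [|||]; try exact: in_nLJ0.
  rewrite Lx0; apply: functional_extensionality => k; rewrite /Defs.Lambda /=.
  by case: ifP => _ //; rewrite complex_of_pair !rmorph0 !(mulr0, addr0).
have := ker (_, _, _)
  (in_nLJB _ _ nx1 ny1) (in_nLJB _ _ nx2 ny2) (in_nLJB _ _ nx3 ny3).
rewrite LambdaB Lxy => /(_ (functional_extensionality _ _ (fun k => subrr _))).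
by case=> /eq_of_subf_eq0 -> /eq_of_subf_eq0 -> /eq_of_subf_eq0 ->.
Qed.

End LambdaKernel.

Lemma Lambda_injective_of_condS a b :
  condS u lam1 lam2 lam3 -> inK u lam1 lam2 lam3 a b ->
  Lambda_injective u lam1 lam2 lam3 a b.
Proof.
move=> condSu /toric_coords_of_inK [p tc].
have mu0p : in_mu0 u lam1 lam2 lam3 p by apply/in_mu0P; exists a, b.
apply/Lambda_injectiveP => -[[x1 x2] x3] /=.
move=> [X1 [nX1 X1L ->]] [X2 [nX2 X2L ->]] [X3 [nX3 X3L ->]] Lx0.
have comb : tadd (tadd (Iop (vf X1 p)) (Sop (vf X2 p))) (Top (vf X3 p)) = tzero R d.
  apply/combination_eq0P => k; apply/(ist_null_cases k tc); split.
    by move=> NL; rewrite X1L ?X2L ?X3L.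
  move=> /andP[L NJ]; have := congr1 (fun f => f k) Lx0.
  by rewrite /Defs.Lambda /= L NJ (negbTE NJ).
have [-> -> ->] := condSu p mu0p X1 X2 X3 nX1 nX2 nX3 comb.
by congr (_, _, _); apply: functional_extensionality => k; case: ifP.
Qed.

Lemma condS_of_Lambda_injective :
  locally_free u lam1 lam2 lam3 ->
  (forall a b, inK u lam1 lam2 lam3 a b -> Lambda_injective u lam1 lam2 lam3 a b) ->
  condS u lam1 lam2 lam3.
Proof.
move=> free inj p mu0p X1 X2 X3 nX1 nX2 nX3 /combination_eq0P comb.
have [a [b tc]] := (in_mu0P p).1 mu0p.
have cases k := (ist_null_cases k tc).1 (comb k).
pose offJ (X : 'I_d -> R) k := if Jset a b k then 0 else X k.
have offJ_nLJ X : in_nfrak u X -> (forall k, ~~ Lset a b k -> X k = 0) ->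
    in_nLJ u (Lset a b) (Jset a b) (offJ X) by exists X.
have [] : (offJ X1, offJ X2, offJ X3) = (zero, zero, zero).
  apply: (Lambda_injectiveP a b).1 (inj a b (inK_of_toric_coords tc)) _ _ _ _ _ => /=.
  - by apply: offJ_nLJ nX1 _ => k /(cases k).1[].
  - by apply: offJ_nLJ nX2 _ => k /(cases k).1[].
  - by apply: offJ_nLJ nX3 _ => k /(cases k).1[].
  apply: functional_extensionality => k; rewrite /Defs.Lambda /offJ /=.
  by case: ifP => // /andP[L NJ]; rewrite (negbTE NJ); apply: (cases k).2; rewrite L.
have vf0 X : in_nfrak u X -> offJ X = zero -> X = zero.
  move=> nX X0; apply: (free p mu0p X nX).
  have X_or_p k : X k = 0 \/ p.1 k = 0 /\ p.2 k = 0.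
    have := congr1 (fun f => f k) X0; rewrite /offJ (JsetE k tc).
    by case: ifP => [/andP[/eqP ? /eqP ?]|]; [right | left].
  rewrite /vf /tzero; congr pair; apply: functional_extensionality => k.
    by case: (X_or_p k) => [->|[-> _]]; rewrite ?rmorph0 !(mulr0, mul0r).
  by case: (X_or_p k) => [->|[_ ->]]; rewrite ?rmorph0 !(mulr0, mul0r).
by move=> /vf0 -> // /vf0 -> // /vf0 ->.
Qed.

End Toric.

Theorem proposition5p9 (R : realType) (d n : nat)
  (u : 'I_d -> 'I_n -> int) (lam1 lam2 lam3 : 'I_d -> R) :
  row_full (umat R u) ->
  locally_free u lam1 lam2 lam3 ->
  (condS u lam1 lam2 lam3 <->
   forall (a : 'I_n -> R) (b : 'I_n -> R[i]),
     inK u lam1 lam2 lam3 a b -> Lambda_injective u lam1 lam2 lam3 a b).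
Proof.
move=> _ free; split=> [condSu a b |].
  exact: Lambda_injective_of_condS.
exact: condS_of_Lambda_injective.
Qed.
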